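(* Assume the standing setting and let $\epsilon>0$. If $|u^0_i-u^0_{i+1}|\le \epsilon/3^{M}$ for all $i\in\mathbb Z$, then for every coarse index $j$, $|v_r-u_r|\le\epsilon$, i.e. $|w^N_{j+1}-u^M_{(j+1)r}|\le\epsilon$.
   Context: Standing setting. Let $F:\mathbb R\to\mathbb R$ be continuously differentiable. For a spatial step $\eta>0$, a time step $\tau>0$ and an initial sequence $(z^0_i)_{i\in\mathbb Z}$ of reals, the EFC (Euler forward in time, centered in space) scheme produces $(z^n_i)_{i\in\mathbb Z,\,n\in\mathbb N}$ by $z^{n+1}_i=z^n_i-F'(z^n_i)\frac{\tau}{2\eta}\,(z^n_{i+1}-z^n_{i-1})$. It satisfies the CFL condition if $|F'(z^n_i)|\,\tau/\eta\le 1$ for all $i\in\mathbb Z$, $n\in\mathbb N$. Fix $a\in\mathbb R$, $h>0$, $\Delta t>0$, an integer $N>1$ and an even integer $r\ge 2$; put $k=h/r$, $dt=\Delta t/r$, $M=Nr$. Let $u_0:\mathbb R\to\mathbb R$. The coarse solution $(w^n_j)$ is the EFC scheme with $\eta=h$, $\tau=\Delta t$, $w^0_j=u_0(a+jh)$; the fine solution $(u^n_i)$ is the EFC scheme with $\eta=k$, $\tau=dt$, $u^0_i=u_0(a+ik)$ (so $w^0_j=u^0_{jr}$). Both are assumed to satisfy the CFL condition. Coarse nodes: $x_j=a+jh$. Interpolant: for a fixed coarse index $j$, set $p_1=x_j$, $p_2=x_{j+1}$, $d_1=w^N_j$, $d_2=w^N_{j+1}$, let $q$ be the cubic with $q(0)=p_1$,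 $q(1)=p_2$, $q'(0)=d_1$, $q'(1)=d_2$, and let $v(t)=q'(t)=(6p_1-6p_2+3d_1+3d_2)t^2+(-6p_1+6p_2-4d_1-2d_2)t+d_1$ for $t\in[0,1]$. For $0\le m\le r$ put $v_m=v(m/r)$ and $u_m=u^M_{jr+m}$ (the fine solution at time step $M$ at the fine node $x_j+mk$). *)

From Stdlib Require Export Reals ZArith.
Open Scope R_scope.

(* EFC scheme (Euler forward in time, centred in space) with flux
   derivative Fp = F', spatial step eta, time step tau, initial data z0.
   efc Fp eta tau z0 n i = z^n_i. *)
Fixpoint efc (Fp : R -> R) (eta tau : R) (z0 : Z -> R) (n : nat) : Z -> R :=
  match n with
  | O => z0
  | S m => fun i =>
      let z := efc Fp eta tau z0 m in
      z i - Fp (z i) * (tau / (2 * eta)) * (z (i + 1)%Z - z (i - 1)%Z)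
  end.

Definition cfl (Fp : R -> R) (eta tau : R) (z : nat -> Z -> R) : Prop :=
  forall (n : nat) (i : Z), Rabs (Fp (z n i)) * tau / eta <= 1.

(* Coarse solution w^n_j : eta = h, tau = Dt, w^0_j = u0 (a + j h). *)
Definition coarse (Fp : R -> R) (a h Dt : R) (u0 : R -> R) : nat -> Z -> R :=
  efc Fp h Dt (fun j => u0 (a + IZR j * h)).

(* Fine solution u^n_i : eta = k = h/r, tau = dt = Dt/r, u^0_i = u0 (a + i k). *)
Definition fine (Fp : R -> R) (a h Dt : R) (r : nat) (u0 : R -> R)
  : nat -> Z -> R :=
  efc Fp (h / INR r) (Dt / INR r) (fun i => u0 (a + IZR i * (h / INR r))).

(* v(t) = q'(t) for the cubic Hermite-type q with q(0)=p1, q(1)=p2,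
   q'(0)=d1, q'(1)=d2. *)
Definition vpoly (p1 p2 d1 d2 t : R) : R :=
  (6 * p1 - 6 * p2 + 3 * d1 + 3 * d2) * t ^ 2
  + (- 6 * p1 + 6 * p2 - 4 * d1 - 2 * d2) * t + d1.

Definition interp (w : nat -> Z -> R) (a h : R) (N : nat) (j : Z) (t : R) : R :=
  vpoly (a + IZR j * h) (a + IZR (j + 1) * h) (w N j) (w N (j + 1)%Z) t.

(* Under the CFL condition the EFC update changes each value by at most half
   the centred difference, hence by at most the largest neighbour difference D.
   So one step moves values by at most D and at most triples neighbour
   differences; after n steps every value lies within 3^n d / 2 of its initial
   value, d being the initial neighbour bound.  The coarse grid samples the
   fine one, so its neighbour bound is r eps/3^M, and since r 3^N <= 3^(N r)
   the coarse and fine drifts at the common node add up to at most eps.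
   Finally v(1) = q'(1) = w^N_(j+1). *)

From Stdlib Require Import Reals ZArith Lra Lia FunctionalExtensionality.
Open Scope R_scope.

Section EFCDrift.
Variables (Fp : R -> R) (eta tau : R) (z0 : Z -> R).
Hypothesis Heta : 0 < eta.
Hypothesis Htau : 0 < tau.
Hypothesis Hcfl : cfl Fp eta tau (efc Fp eta tau z0).

Let z := efc Fp eta tau z0.

Lemma efc_step_le n D :
  (forall i, Rabs (z n i - z n (i + 1)%Z) <= D) ->
  forall i, Rabs (z (S n) i - z n i) <= D.
Proof.
  intros Hdiff i; unfold z; simpl; fold z.
  set (c := Fp (z n i) * (tau / (2 * eta))).
  assert (Hc : Rabs c <= / 2).
  { unfold c; rewrite Rabs_mult, (Rabs_right (tau / (2 * eta)));
      [| apply Rle_ge, Rlt_le, Rdiv_lt_0_compat; lra].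
    replace (Rabs (Fp (z n i)) * (tau / (2 * eta)))
      with (/ 2 * (Rabs (Fp (z n i)) * tau / eta)) by (field; lra).
    pose proof (Hcfl n i) as Hn; fold z in Hn; lra. }
  assert (Hcentred : Rabs (z n (i + 1)%Z - z n (i - 1)%Z) <= 2 * D).
  { pose proof (Hdiff i) as H1; pose proof (Hdiff (i - 1)%Z) as H2.
    replace (i - 1 + 1)%Z with i in H2 by lia.
    replace (z n (i + 1)%Z - z n (i - 1)%Z)
      with (- (z n i - z n (i + 1)%Z) - (z n (i - 1)%Z - z n i)) by ring.
    eapply Rle_trans; [apply Rabs_triang |]; rewrite !Rabs_Ropp; lra. }
  replace (z n i - c * (z n (i + 1)%Z - z n (i - 1)%Z) - z n i)
    with (- (c * (z n (i + 1)%Z - z n (i - 1)%Z))) by ring.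
  rewrite Rabs_Ropp, Rabs_mult.
  pose proof (Rabs_pos c); pose proof (Rabs_pos (z n (i + 1)%Z - z n (i - 1)%Z)).
  nra.
Qed.

Variable d : R.
Hypothesis Hinit : forall i, Rabs (z0 i - z0 (i + 1)%Z) <= d.

Lemma efc_neighbour_diff_le n i :
  Rabs (z n i - z n (i + 1)%Z) <= 3 ^ n * d.
Proof.
  revert i; induction n as [| n IH]; intros i.
  - rewrite Rmult_1_l; apply Hinit.
  - pose proof (efc_step_le n _ IH i) as Hi.
    pose proof (efc_step_le n _ IH (i + 1)%Z) as Hi1.
    pose proof (IH i) as Hn.
    replace (z (S n) i - z (S n) (i + 1)%Z)
      with ((z (S n) i - z n i) + (z n i - z n (i + 1)%Z)
            + - (z (S n) (i + 1)%Z - z n (i + 1)%Z)) by ring.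
    pose proof (Rabs_triang ((z (S n) i - z n i) + (z n i - z n (i + 1)%Z))
                  (- (z (S n) (i + 1)%Z - z n (i + 1)%Z))) as T1.
    pose proof (Rabs_triang (z (S n) i - z n i) (z n i - z n (i + 1)%Z)) as T2.
    rewrite Rabs_Ropp in T1; simpl; lra.
Qed.

Lemma efc_drift_le (Hd : 0 <= d) n i :
  Rabs (z n i - z0 i) <= 3 ^ n * d / 2.
Proof.
  revert i; induction n as [| n IH]; intros i.
  - unfold z; simpl; unfold Rminus; rewrite Rplus_opp_r, Rabs_R0; lra.
  - pose proof (efc_step_le n _ (efc_neighbour_diff_le n) i) as Hstep.
    pose proof (IH i) as Hn.
    replace (z (S n) i - z0 i) with ((z (S n) i - z n i) + (z n i - z0 i)) by ring.
    eapply Rle_trans; [apply Rabs_triang |].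
    assert (0 <= 3 ^ n * d) by (apply Rmult_le_pos; [apply pow_le |]; lra).
    simpl; lra.
Qed.

End EFCDrift.

Lemma Rabs_sub_shift_le (f : Z -> R) d :
  (forall i, Rabs (f i - f (i + 1)%Z) <= d) ->
  forall m i, Rabs (f i - f (i + Z.of_nat m)%Z) <= INR m * d.
Proof.
  intros H m; induction m as [| m IH]; intros i.
  - replace (i + Z.of_nat 0)%Z with i by lia.
    unfold Rminus; rewrite Rplus_opp_r, Rabs_R0; simpl; lra.
  - rewrite S_INR; replace (i + Z.of_nat (S m))%Z with (i + Z.of_nat m + 1)%Z by lia.
    replace (f i - f (i + Z.of_nat m + 1)%Z)
      with ((f i - f (i + Z.of_nat m)%Z)
            + (f (i + Z.of_nat m)%Z - f (i + Z.of_nat m + 1)%Z)) by ring.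
    eapply Rle_trans; [apply Rabs_triang |].
    pose proof (IH i); pose proof (H (i + Z.of_nat m)%Z); lra.
Qed.

Lemma INR_mul_le_pow r x : (1 <= r)%nat -> 2 <= x -> INR r * x <= x ^ r.
Proof.
  intros Hr Hx; induction r as [| r IH]; [lia |].
  destruct r as [| r]; [simpl; lra |].
  assert (IHr : INR (S r) * x <= x ^ S r) by (apply IH; lia).
  assert (1 <= INR (S r)) by (rewrite S_INR; pose proof (pos_INR r); lra).
  rewrite S_INR; change (x ^ S (S r)) with (x * x ^ S r).
  assert (INR (S r) * x * x <= x * x ^ S r) by nra.
  assert (1 <= INR (S r) * (x - 1)) by nra.
  assert ((INR (S r) + 1) * x <= INR (S r) * x * x) by nra.
  lra.
Qed.

Lemma efc_refinement_close Fp eta tau (r N : nat) (y0 : Z -> R) (delta : R)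
  (Heta : 0 < eta) (Htau : 0 < tau) (Hr : (1 <= r)%nat) (HN : (1 <= N)%nat)
  (Hdelta : 0 <= delta)
  (Hcfl_coarse : cfl Fp eta tau (efc Fp eta tau (fun j => y0 (j * Z.of_nat r)%Z)))
  (Hcfl_fine : cfl Fp (eta / INR r) (tau / INR r) (efc Fp (eta / INR r) (tau / INR r) y0))
  (Hinit : forall i, Rabs (y0 i - y0 (i + 1)%Z) <= delta) (j : Z) :
  Rabs (efc Fp eta tau (fun j => y0 (j * Z.of_nat r)%Z) N j
        - efc Fp (eta / INR r) (tau / INR r) y0 (N * r)%nat (j * Z.of_nat r)%Z)
    <= 3 ^ (N * r) * delta.
Proof.
  assert (Hrpos : 0 < INR r) by (apply lt_0_INR; lia).
  set (x0 := fun j => y0 (j * Z.of_nat r)%Z).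
  assert (Hcoarse_init : forall j, Rabs (x0 j - x0 (j + 1)%Z) <= INR r * delta).
  { intros k; unfold x0.
    replace ((k + 1) * Z.of_nat r)%Z with (k * Z.of_nat r + Z.of_nat r)%Z by lia.
    apply (Rabs_sub_shift_le y0 delta Hinit). }
  pose proof (efc_drift_le Fp eta tau x0 Heta Htau Hcfl_coarse _ Hcoarse_init
                (Rmult_le_pos _ _ (pos_INR r) Hdelta) N j) as Dcoarse.
  pose proof (efc_drift_le Fp (eta / INR r) (tau / INR r) y0
                ltac:(apply Rdiv_lt_0_compat; lra) ltac:(apply Rdiv_lt_0_compat; lra)
                Hcfl_fine _ Hinit Hdelta (N * r) (j * Z.of_nat r)%Z) as Dfine.
  change (y0 (j * Z.of_nat r)%Z) with (x0 j) in Dfine.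
  assert (Hpow : INR r * 3 ^ N <= 3 ^ (N * r)).
  { rewrite pow_mult; apply INR_mul_le_pow; [exact Hr |].
    apply Rle_trans with (3 ^ 1); [simpl; lra | apply Rle_pow; [lra | exact HN]]. }
  set (c := efc Fp eta tau x0 N j) in *.
  set (f := efc Fp (eta / INR r) (tau / INR r) y0 (N * r)%nat (j * Z.of_nat r)%Z) in *.
  replace (c - f) with ((c - x0 j) + - (f - x0 j)) by ring.
  eapply Rle_trans; [apply Rabs_triang |]; rewrite Rabs_Ropp.
  assert (0 <= delta * (3 ^ (N * r) - INR r * 3 ^ N)) by (apply Rmult_le_pos; lra).
  nra.
Qed.

Lemma vpoly_at_1 p1 p2 d1 d2 : vpoly p1 p2 d1 d2 1 = d2.
Proof. unfold vpoly; ring. Qed.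

Theorem proposition8
  (F Fp : R -> R)
  (HF : forall x, derivable_pt_lim F x (Fp x))
  (HFp : continuity Fp)
  (a h Dt : R) (N r : nat) (u0 : R -> R)
  (Hh : 0 < h) (HDt : 0 < Dt) (HN : (1 < N)%nat)
  (Hr2 : (2 <= r)%nat) (Hreven : exists m : nat, r = (2 * m)%nat)
  (Hcfl_coarse : cfl Fp h Dt (coarse Fp a h Dt u0))
  (Hcfl_fine : cfl Fp (h / INR r) (Dt / INR r) (fine Fp a h Dt r u0))
  (eps : R) (Heps : 0 < eps)
  (Hinit : forall i : Z,
      Rabs (fine Fp a h Dt r u0 0 i - fine Fp a h Dt r u0 0 (i + 1)%Z)
        <= eps / 3 ^ (N * r))
  : forall j : Z,
      Rabs (interp (coarse Fp a h Dt u0) a h N j (INR r / INR r)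
            - fine Fp a h Dt r u0 (N * r)%nat (j * Z.of_nat r + Z.of_nat r)%Z)
        <= eps
   /\ Rabs (coarse Fp a h Dt u0 N (j + 1)%Z
            - fine Fp a h Dt r u0 (N * r)%nat ((j + 1) * Z.of_nat r)%Z)
        <= eps.
Proof.
  assert (Hrpos : 0 < INR r) by (apply lt_0_INR; lia).
  assert (H3pos : 0 < 3 ^ (N * r)) by (apply pow_lt; lra).
  set (y0 := fun i => u0 (a + IZR i * (h / INR r))).
  assert (Hsample : coarse Fp a h Dt u0 = efc Fp h Dt (fun j => y0 (j * Z.of_nat r)%Z)).
  { unfold coarse, y0; do 2 f_equal; apply functional_extensionality; intros j.
    rewrite mult_IZR, <- INR_IZR_INZ; f_equal; field; lra. }
  assert (Hclose : forall j, Rabs (coarse Fp a h Dt u0 N j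
                     - fine Fp a h Dt r u0 (N * r)%nat (j * Z.of_nat r)%Z) <= eps).
  { intros j; rewrite Hsample.
    replace eps with (3 ^ (N * r) * (eps / 3 ^ (N * r))) by (field; lra).
    apply efc_refinement_close; try lia; try assumption.
    - apply Rlt_le, Rdiv_lt_0_compat; lra.
    - rewrite <- Hsample; exact Hcfl_coarse. }
  intros j; split; [| apply Hclose].
  unfold interp; replace (INR r / INR r) with 1 by (field; lra).
  rewrite vpoly_at_1.
  replace (j * Z.of_nat r + Z.of_nat r)%Z with ((j + 1) * Z.of_nat r)%Z by lia.
  apply Hclose.
Qed.
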